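(* Let $A\in\mathbb{H}^{m\times n}$ have full row rank, let $p\ge2$ be an integer, $\alpha\in(0,2/\|A\|_2^2)$, $X_0=\alpha A^H$, and $X_{k+1}=X_k\sum_{i=0}^{p-1}E_k^{\,i}$ where $E_k=I_m-AX_k$. Then $\|E_k\|_2\le\|E_0\|_2^{\,p^k}\to0$, hence $AX_k\to I_m$; moreover $X_kA\to Q=A^\dagger A$; and $(X_k)$ converges in operator norm to $A^\dagger$.
   Context: $\mathbb{H}$ denotes the real quaternions; $X^H=\overline{X}^\top$ is the quaternionic conjugate transpose; $\|\cdot\|_2$ is the operator norm induced by the Euclidean norm $\|x\|_2=\sqrt{\mathrm{Re}\,x^Hx}$. $A^\dagger$ is the Moore–Penrose pseudoinverse: the unique $A^\dagger\in\mathbb{H}^{n\times m}$ with $AA^\dagger A=A$, $A^\dagger AA^\dagger=A^\dagger$, $(AA^\dagger)^H=AA^\dagger$, $(A^\dagger A)^H=A^\dagger A$. All products are quaternionic matrix products in the written order. *)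

From HB Require Import structures.
From mathcomp Require Import all_boot all_order all_algebra.
From mathcomp Require Import all_classical all_reals all_analysis.
From mathcomp Require Import ring.

Set Implicit Arguments.
Unset Strict Implicit.
Unset Printing Implicit Defensive.

Import Order.TTheory GRing.Theory Num.Theory.
Local Open Scope ring_scope.

Record quat (R : Type) := Quat { qre : R; qi : R; qj : R; qk : R }.

Module QuatEqChoice.
Section S.
Variable R : Type.
Definition seq_of_quat (x : quat R) :=
  let: Quat a b c d := x in [:: a; b; c; d].
Definition quat_of_seq (s : seq R) :=
  if s is [:: a; b; c; d] then Some (Quat a b c d) else None.
Lemma seq_of_quatK : pcancel seq_of_quat quat_of_seq.
Proof. by case. Qed.
End S.
End QuatEqChoice.

HB.instance Definition _ (R : eqType) := Equality.copy (quat R)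
  (pcan_type (@QuatEqChoice.seq_of_quatK R)).
HB.instance Definition _ (R : choiceType) := Choice.copy (quat R)
  (pcan_type (@QuatEqChoice.seq_of_quatK R)).

Section QuatRing.
Variable R : comNzRingType.

Definition addq (x y : quat R) :=
  let: Quat a b c d := x in let: Quat a' b' c' d' := y in
  Quat (a + a') (b + b') (c + c') (d + d').
Definition oppq (x : quat R) :=
  let: Quat a b c d := x in Quat (- a) (- b) (- c) (- d).
Definition zeroq : quat R := Quat 0 0 0 0.

Program Definition quat_zmodMixin :=
  @GRing.isZmodule.Build (quat R) zeroq oppq addq _ _ _ _.
Next Obligation. by move=> [? ? ? ?] [? ? ? ?] [? ? ? ?] /=; rewrite !addrA. Qed.
Next Obligation. by move=> [? ? ? ?] [? ? ? ?] /=; congr Quat; rewrite addrC. Qed.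
Next Obligation. by move=> [? ? ? ?] /=; rewrite !add0r. Qed.
Next Obligation. by move=> [? ? ? ?] /=; rewrite !addNr. Qed.
HB.instance Definition _ := quat_zmodMixin.

(* Hamilton product: i^2 = j^2 = k^2 = ijk = -1 *)
Definition mulq (x y : quat R) :=
  let: Quat a1 b1 c1 d1 := x in let: Quat a2 b2 c2 d2 := y in
  Quat (a1 * a2 - b1 * b2 - c1 * c2 - d1 * d2)
       (a1 * b2 + b1 * a2 + c1 * d2 - d1 * c2)
       (a1 * c2 - b1 * d2 + c1 * a2 + d1 * b2)
       (a1 * d2 + b1 * c2 - c1 * b2 + d1 * a2).
Definition oneq : quat R := Quat 1 0 0 0.

Lemma mulqA : associative mulq.
Proof. by move=> [? ? ? ?] [? ? ? ?] [? ? ? ?] /=; congr Quat; ring. Qed.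
Lemma mul1q : left_id oneq mulq.
Proof. by move=> [? ? ? ?] /=; congr Quat; ring. Qed.
Lemma mulq1 : right_id oneq mulq.
Proof. by move=> [? ? ? ?] /=; congr Quat; ring. Qed.
Lemma mulqDl : left_distributive mulq +%R.
Proof. by move=> [? ? ? ?] [? ? ? ?] [? ? ? ?] /=; congr Quat; ring. Qed.
Lemma mulqDr : right_distributive mulq +%R.
Proof. by move=> [? ? ? ?] [? ? ? ?] [? ? ? ?] /=; congr Quat; ring. Qed.
Lemma oneq_neq0 : oneq != 0.
Proof. by apply/eqP => -[] /eqP; rewrite oner_eq0. Qed.

HB.instance Definition _ := GRing.Zmodule_isNzRing.Build (quat R)
  mulqA mul1q mulq1 mulqDl mulqDr oneq_neq0.

Definition conjq (x : quat R) :=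
  let: Quat a b c d := x in Quat a (- b) (- c) (- d).
Definition realq (r : R) : quat R := Quat r 0 0 0.

End QuatRing.

Section QuatMatrix.
Variable R : realType.
Local Notation H := (quat R).

Definition conjT m n (X : 'M[H]_(m, n)) : 'M[H]_(n, m) :=
  map_mx (@conjq R) X^T.

Definition vnorm n (x : 'cV[H]_n) : R :=
  Num.sqrt (qre ((conjT x *m x) 0 0)).

Definition opnorm m n (X : 'M[H]_(m, n)) : R :=
  sup [set vnorm (X *m x) | x in [set x : 'cV[H]_n | vnorm x <= 1]].

Definition full_row_rank m n (A : 'M[H]_(m, n)) : Prop :=
  forall c : 'rV[H]_m, c *m A = 0 -> c = 0.

Definition is_MP_inverse m n (A : 'M[H]_(m, n)) (G : 'M[H]_(n, m)) : Prop :=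
  [/\ A *m G *m A = A, G *m A *m G = G,
      conjT (A *m G) = A *m G & conjT (G *m A) = G *m A].

Fixpoint hyperpower m n (A : 'M[H]_(m, n)) (p : nat) (alpha : R) (k : nat)
  : 'M[H]_(n, m) :=
  match k with
  | 0 => realq alpha *: conjT A
  | k'.+1 =>
      let X := hyperpower A p alpha k' in
      X *m (\sum_(i < p) (1%:M - A *m X) ^+ i)
  end.

Definition hp_residual m n (A : 'M[H]_(m, n)) (p : nat) (alpha : R) (k : nat)
  : 'M[H]_m := 1%:M - A *m hyperpower A p alpha k.

End QuatMatrix.

(* The geometric sum gives I - (I - E) (sum_{i<p} E^i) = E^p, so
   E_{k+1} = E_k^p and E_k = E_0^(p^k).  With y = A^H x,
   ||E_0 x||^2 = ||x||^2 - 2 alpha ||y||^2 + alpha^2 ||A y||^2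
             <= ||x||^2 - alpha (2 - alpha ||A||^2) ||y||^2,
   and full row rank bounds ||y||^2 below by c ||x||^2 (A has a right inverse B,
   and x = B^H y), so ||E_0|| < 1 and A X_k -> I.  The pseudoinverse is
   A^+ = A^H (A A^H)^-1, where A A^H is invertible because it has full row rank
   (quaternionic Gaussian elimination gives right inverses).  Every X_k is of the
   form A^H Z, so A^+ A X_k = X_k and X_k - A^+ = A^+ (A X_k - I) -> 0. *)

From HB Require Import structures.
From mathcomp Require Import all_boot all_order all_algebra.
From mathcomp Require Import all_classical all_reals all_analysis.
From mathcomp Require Import ring lra.

Import Order.TTheory GRing.Theory Num.Theory.
Import numFieldNormedType.Exports.
Local Open Scope ring_scope.
Local Open Scope classical_set_scope.

Set Implicit Arguments.
Unset Strict Implicit.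
Unset Printing Implicit Defensive.

Section QuaternionAlgebra.
Variable R : comNzRingType.
Local Notation H := (quat R).

Definition qnorm2 (q : H) := qre q ^+ 2 + qi q ^+ 2 + qj q ^+ 2 + qk q ^+ 2.

Lemma qre_is_zmod_morphism : zmod_morphism (@qre R).
Proof. by move=> [? ? ? ?] [? ? ? ?]. Qed.
HB.instance Definition _ :=
  GRing.isZmodMorphism.Build H R (@qre R) qre_is_zmod_morphism.

Lemma qi_is_zmod_morphism : zmod_morphism (@qi R).
Proof. by move=> [? ? ? ?] [? ? ? ?]. Qed.
HB.instance Definition _ :=
  GRing.isZmodMorphism.Build H R (@qi R) qi_is_zmod_morphism.

Lemma qj_is_zmod_morphism : zmod_morphism (@qj R).
Proof. by move=> [? ? ? ?] [? ? ? ?]. Qed.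
HB.instance Definition _ :=
  GRing.isZmodMorphism.Build H R (@qj R) qj_is_zmod_morphism.

Lemma qk_is_zmod_morphism : zmod_morphism (@qk R).
Proof. by move=> [? ? ? ?] [? ? ? ?]. Qed.
HB.instance Definition _ :=
  GRing.isZmodMorphism.Build H R (@qk R) qk_is_zmod_morphism.

Lemma conjq_is_zmod_morphism : zmod_morphism (@conjq R).
Proof. by move=> [? ? ? ?] [? ? ? ?] /=; congr Quat; ring. Qed.
HB.instance Definition _ :=
  GRing.isZmodMorphism.Build H H (@conjq R) conjq_is_zmod_morphism.

Lemma conjqM (a b : H) : conjq (a * b) = conjq b * conjq a.
Proof. by case: a => ? ? ? ?; case: b => ? ? ? ? /=; congr Quat; ring. Qed.

Lemma conjqK : involutive (@conjq R).
Proof. by case=> ? ? ? ? /=; congr Quat; ring. Qed.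

Lemma conjq1 : conjq (1 : H) = 1.
Proof. by congr Quat; ring. Qed.

Lemma realqC (r : R) (q : H) : realq r * q = q * realq r.
Proof. by case: q => ? ? ? ? /=; congr Quat; ring. Qed.

Lemma realqM (r s : R) : realq (r * s) = realq r * realq s :> H.
Proof. by congr Quat; ring. Qed.

Lemma qre_realqM (r : R) (a : H) : qre (realq r * a) = r * qre a.
Proof. by case: a => ? ? ? ? /=; ring. Qed.

Lemma qre_conjqMC (a b : H) : qre (conjq a * b) = qre (conjq b * a).
Proof. by case: a => ? ? ? ?; case: b => ? ? ? ? /=; ring. Qed.

Lemma qnorm2E (a : H) : qnorm2 a = qre (conjq a * a).
Proof. by case: a => ? ? ? ?; rewrite /qnorm2 /=; ring. Qed.

Lemma mulq_conjq (q : H) : q * conjq q = realq (qnorm2 q).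
Proof. by case: q => ? ? ? ?; rewrite /qnorm2 /=; congr Quat; ring. Qed.

Lemma qnorm2M (a b : H) : qnorm2 (a * b) = qnorm2 a * qnorm2 b.
Proof. by case: a => ? ? ? ?; case: b => ? ? ? ?; rewrite /qnorm2 /=; ring. Qed.

Lemma qnorm2N (a : H) : qnorm2 (- a) = qnorm2 a.
Proof. by case: a => ? ? ? ?; rewrite /qnorm2 /=; ring. Qed.

Lemma qnorm20 : qnorm2 (0 : H) = 0.
Proof. by rewrite /qnorm2 /=; ring. Qed.

End QuaternionAlgebra.

Lemma sqr_sum_le (R : realFieldType) n (a : 'I_n -> R) :
  (\sum_i a i) ^+ 2 <= n%:R * \sum_i a i ^+ 2.
Proof.
have amgm i j : a i * a j <= (a i ^+ 2 + a j ^+ 2) / 2.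
  by have := sqr_ge0 (a i - a j); rewrite sqrrB; lra.
have <- : \sum_i \sum_j (a i ^+ 2 + a j ^+ 2) / 2 = n%:R * \sum_i a i ^+ 2.
  under eq_bigr do rewrite -mulr_suml big_split /= sumr_const card_ord.
  by rewrite -mulr_suml big_split /= sumr_const card_ord sumrMnl -mulr_natl; field.
rewrite expr2 mulr_suml; apply: ler_sum => i _.
by rewrite mulr_sumr; apply: ler_sum => j _; apply: amgm.
Qed.

Section QuaternionNorm.
Variable R : realFieldType.
Local Notation H := (quat R).

Lemma qnorm2_ge0 (q : H) : 0 <= qnorm2 q.
Proof. by rewrite /qnorm2 !addr_ge0 ?sqr_ge0. Qed.

Lemma qnorm2_eq0 (q : H) : (qnorm2 q == 0) = (q == 0).
Proof.
case: q => a b c d; rewrite /qnorm2 /= !paddr_eq0 ?addr_ge0 ?sqr_ge0 // !sqrf_eq0 -!andbA.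
by apply/and4P/eqP => [[/eqP-> /eqP-> /eqP-> /eqP->] // | [-> -> -> ->]].
Qed.

Definition invq (q : H) := conjq q * realq (qnorm2 q)^-1.

Lemma mulqV (q : H) : q != 0 -> q * invq q = 1.
Proof.
by move=> q0; rewrite /invq mulrA mulq_conjq -realqM mulfV // qnorm2_eq0.
Qed.

Lemma qnorm2_sum_le n (q : 'I_n -> H) :
  qnorm2 (\sum_i q i) <= n%:R * \sum_i qnorm2 (q i).
Proof.
rewrite /qnorm2 !raddf_sum /= !big_split /= !mulrDr.
have := sqr_sum_le (fun i => qre (q i)); have := sqr_sum_le (fun i => qi (q i)).
have := sqr_sum_le (fun i => qj (q i)); have := sqr_sum_le (fun i => qk (q i)).
lra.
Qed.

End QuaternionNorm.

Section ConjugateTranspose.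
Variable R : realType.
Local Notation H := (quat R).

Lemma conjTE m n (X : 'M[H]_(m, n)) i j : conjT X i j = conjq (X j i).
Proof. by rewrite !mxE. Qed.

Lemma conjTK m n (X : 'M[H]_(m, n)) : conjT (conjT X) = X.
Proof. by apply/matrixP => i j; rewrite !conjTE conjqK. Qed.

Lemma conjT0 m n : conjT (0 : 'M[H]_(m, n)) = 0.
Proof. by apply/matrixP => i j; rewrite conjTE !mxE raddf0. Qed.

Lemma conjT1 m : conjT (1%:M : 'M[H]_m) = 1%:M.
Proof.
apply/matrixP => i j; rewrite conjTE !mxE eq_sym.
by case: (i == j); rewrite ?raddf0 ?conjq1.
Qed.

Lemma conjT_mulmx m n p (X : 'M[H]_(m, n)) (Y : 'M[H]_(n, p)) :
  conjT (X *m Y) = conjT Y *m conjT X.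
Proof.
apply/matrixP => i j; rewrite conjTE !mxE raddf_sum; apply: eq_bigr => k _.
by rewrite !conjTE -conjqM.
Qed.

Lemma mulmx_realqZ m n p (r : R) (X : 'M[H]_(m, n)) (Y : 'M[H]_(n, p)) :
  X *m (realq r *: Y) = realq r *: (X *m Y).
Proof.
apply/matrixP => i j; rewrite !mxE mulr_sumr; apply: eq_bigr => k _.
by rewrite mxE mulrA -realqC mulrA.
Qed.

End ConjugateTranspose.

Section EuclideanNorm.
Variable R : realType.
Local Notation H := (quat R).

Definition cVdot n (x y : 'cV[H]_n) : R := qre ((conjT x *m y) 0 0).
Definition vnorm2 n (x : 'cV[H]_n) : R := cVdot x x.

Lemma cVdotE n (x y : 'cV[H]_n) : cVdot x y = \sum_i qre (conjq (x i 0) * y i 0).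
Proof. by rewrite /cVdot mxE raddf_sum; apply: eq_bigr => k _; rewrite conjTE. Qed.

Lemma vnorm2E n (x : 'cV[H]_n) : vnorm2 x = \sum_i qnorm2 (x i 0).
Proof. by rewrite /vnorm2 cVdotE; apply: eq_bigr => i _; rewrite qnorm2E. Qed.

Lemma vnorm2_ge0 n (x : 'cV[H]_n) : 0 <= vnorm2 x.
Proof. by rewrite vnorm2E sumr_ge0 // => i _; apply: qnorm2_ge0. Qed.

Lemma qnorm2_le_vnorm2 n (x : 'cV[H]_n) i : qnorm2 (x i 0) <= vnorm2 x.
Proof. by rewrite vnorm2E (bigD1 i) //= lerDl sumr_ge0 // => j _; apply: qnorm2_ge0. Qed.

Lemma vnorm2_eq0 n (x : 'cV[H]_n) : vnorm2 x = 0 -> x = 0.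
Proof.
move=> x0; apply/matrixP => i j; rewrite (ord1 j) mxE; apply/eqP.
by rewrite -qnorm2_eq0 eq_le qnorm2_ge0 andbT -x0 qnorm2_le_vnorm2.
Qed.

Lemma vnorm2N n (x : 'cV[H]_n) : vnorm2 (- x) = vnorm2 x.
Proof. by rewrite !vnorm2E; apply: eq_bigr => i _; rewrite mxE qnorm2N. Qed.

Lemma vnorm20 n : vnorm2 (0 : 'cV[H]_n) = 0.
Proof. by rewrite vnorm2E big1 // => i _; rewrite mxE qnorm20. Qed.

Lemma cVdotC n (x y : 'cV[H]_n) : cVdot x y = cVdot y x.
Proof. by rewrite !cVdotE; apply: eq_bigr => i _; rewrite qre_conjqMC. Qed.

Lemma cVdotBr n (x y z : 'cV[H]_n) : cVdot x (y - z) = cVdot x y - cVdot x z.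
Proof. by rewrite /cVdot mulmxBr !mxE raddfB. Qed.

Lemma cVdotBl n (x y z : 'cV[H]_n) : cVdot (y - z) x = cVdot y x - cVdot z x.
Proof. by rewrite cVdotC cVdotBr !(cVdotC x). Qed.

Lemma cVdot_realqZr n (r : R) (x y : 'cV[H]_n) :
  cVdot x (realq r *: y) = r * cVdot x y.
Proof. by rewrite /cVdot mulmx_realqZ mxE qre_realqM. Qed.

Lemma cVdot_realqZl n (r : R) (x y : 'cV[H]_n) :
  cVdot (realq r *: x) y = r * cVdot x y.
Proof. by rewrite cVdotC cVdot_realqZr cVdotC. Qed.

Lemma cVdot_mulmxr m n (M : 'M[H]_(m, n)) (x : 'cV[H]_m) (y : 'cV[H]_n) :
  cVdot x (M *m y) = cVdot (conjT M *m x) y.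
Proof. by rewrite /cVdot conjT_mulmx conjTK mulmxA. Qed.

Lemma vnorm2_realqZ n (r : R) (x : 'cV[H]_n) :
  vnorm2 (realq r *: x) = r ^+ 2 * vnorm2 x.
Proof. by rewrite /vnorm2 cVdot_realqZr cVdot_realqZl mulrA -expr2. Qed.

Lemma vnorm2_mulmx_le m n (X : 'M[H]_(m, n)) (x : 'cV[H]_n) :
  vnorm2 (X *m x) <= (n%:R * \sum_i \sum_j qnorm2 (X i j)) * vnorm2 x.
Proof.
rewrite vnorm2E -mulrA mulr_suml mulr_sumr; apply: ler_sum => i _.
rewrite mxE (le_trans (qnorm2_sum_le _)) // ler_wpM2l // mulr_suml.
by apply: ler_sum => j _; rewrite qnorm2M ler_wpM2l ?qnorm2_ge0 ?qnorm2_le_vnorm2.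
Qed.

Lemma vnormE n (x : 'cV[H]_n) : vnorm x = Num.sqrt (vnorm2 x).
Proof. by []. Qed.

Lemma sqr_vnorm n (x : 'cV[H]_n) : vnorm x ^+ 2 = vnorm2 x.
Proof. by rewrite sqr_sqrtr // vnorm2_ge0. Qed.

Lemma vnorm_ge0 n (x : 'cV[H]_n) : 0 <= vnorm x.
Proof. exact: sqrtr_ge0. Qed.

Lemma vnorm0 n : vnorm (0 : 'cV[H]_n) = 0.
Proof. by rewrite vnormE vnorm20 sqrtr0. Qed.

Lemma vnorm_eq0 n (x : 'cV[H]_n) : vnorm x = 0 -> x = 0.
Proof. by move=> x0; apply: vnorm2_eq0; rewrite -sqr_vnorm x0 expr0n. Qed.

Lemma vnormN n (x : 'cV[H]_n) : vnorm (- x) = vnorm x.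
Proof. by rewrite !vnormE vnorm2N. Qed.

Lemma vnorm_realqZ n (r : R) (x : 'cV[H]_n) : vnorm (realq r *: x) = `|r| * vnorm x.
Proof. by rewrite !vnormE vnorm2_realqZ sqrtrM ?sqr_ge0 // sqrtr_sqr. Qed.

End EuclideanNorm.

Section OperatorNorm.
Variable R : realType.
Local Notation H := (quat R).

Lemma opnorm_has_ubound m n (X : 'M[H]_(m, n)) :
  has_ubound [set vnorm (X *m x) | x in [set x | vnorm x <= 1]].
Proof.
set K := n%:R * \sum_i \sum_j qnorm2 (X i j).
have K0 : 0 <= K.
  by rewrite mulr_ge0 // sumr_ge0 // => i _; rewrite sumr_ge0 // => j _; apply: qnorm2_ge0.
exists (Num.sqrt K) => _ [x /= x1 <-].
have x21 : vnorm2 x <= 1 by rewrite -sqr_vnorm exprn_ile1 ?vnorm_ge0.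
rewrite vnormE ler_sqrt // (le_trans (vnorm2_mulmx_le X x)) //.
by rewrite ler_piMr ?vnorm2_ge0.
Qed.

Lemma vnorm_mulmx_le1 m n (X : 'M[H]_(m, n)) x :
  vnorm x <= 1 -> vnorm (X *m x) <= opnorm X.
Proof. by move=> x1; apply: ub_le_sup; [exact: opnorm_has_ubound | exists x]. Qed.

Lemma opnorm_ge0 m n (X : 'M[H]_(m, n)) : 0 <= opnorm X.
Proof.
by rewrite (le_trans (vnorm_ge0 (X *m 0))) // vnorm_mulmx_le1 // vnorm0.
Qed.

Lemma opnorm_le m n (X : 'M[H]_(m, n)) K :
  (forall x, vnorm x <= 1 -> vnorm (X *m x) <= K) -> opnorm X <= K.
Proof.
move=> XK; apply: ge_sup => [|_ [x /= x1 <-]]; last exact: XK.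
by exists (vnorm (X *m 0)), 0 => //=; rewrite vnorm0.
Qed.

Lemma vnorm_mulmx_le m n (X : 'M[H]_(m, n)) x :
  vnorm (X *m x) <= opnorm X * vnorm x.
Proof.
have [/vnorm_eq0 ->|x0] := eqVneq (vnorm x) 0.
  by rewrite mulmx0 !vnorm0 mulr0.
have xpos : 0 < vnorm x by rewrite lt_def x0 vnorm_ge0.
have := @vnorm_mulmx_le1 _ _ X (realq (vnorm x)^-1 *: x).
rewrite mulmx_realqZ !vnorm_realqZ ger0_norm ?invr_ge0 ?vnorm_ge0 // mulVf //.
by rewrite ler_pdivrMl // mulrC => ->.
Qed.

Lemma opnorm_mulmx m n p (X : 'M[H]_(m, n)) (Y : 'M[H]_(n, p)) :
  opnorm (X *m Y) <= opnorm X * opnorm Y.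
Proof.
apply: opnorm_le => x x1; rewrite -mulmxA (le_trans (vnorm_mulmx_le _ _)) //.
rewrite ler_wpM2l ?opnorm_ge0 // (le_trans (vnorm_mulmx_le _ _)) //.
by rewrite -[leRHS]mulr1 ler_wpM2l ?opnorm_ge0.
Qed.

Lemma opnormN m n (X : 'M[H]_(m, n)) : opnorm (- X) = opnorm X.
Proof.
have le_opnormN (Y : 'M[H]_(m, n)) : opnorm (- Y) <= opnorm Y.
  by apply: opnorm_le => x x1; rewrite mulNmx vnormN vnorm_mulmx_le1.
by apply/eqP; rewrite eq_le le_opnormN -{1}[X]opprK le_opnormN.
Qed.

Lemma opnormX m (M : 'M[H]_m) k : opnorm (M ^+ k) <= opnorm M ^+ k.
Proof.
elim: k => [|k IHk]; first by rewrite !expr0; apply: opnorm_le => x; rewrite mul1mx.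
rewrite !exprS (le_trans (opnorm_mulmx M (M ^+ k))) //.
by rewrite ler_wpM2l ?opnorm_ge0.
Qed.

Lemma vnorm2_mulmx_opnorm m n (X : 'M[H]_(m, n)) x :
  vnorm2 (X *m x) <= opnorm X ^+ 2 * vnorm2 x.
Proof.
by rewrite -!sqr_vnorm -exprMn !expr2 ler_pM ?vnorm_ge0 ?vnorm_mulmx_le.
Qed.

Lemma opnorm_lt1 m n (M : 'M[H]_(m, n)) d : 0 < d ->
  (forall x, vnorm2 (M *m x) <= (1 - d) * vnorm2 x) -> opnorm M < 1.
Proof.
move=> d0 Md; set b := Num.min d 1.
have [b0 bd b1] : [/\ 0 < b, b <= d & b <= 1].
  by rewrite lt_min d0 ltr01 !ge_min !lexx ?orbT.
apply: (@le_lt_trans _ _ (Num.sqrt (1 - b))); last first.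
  by rewrite -[X in _ < X]sqrtr1 ltr_sqrt ?ltr01 //; lra.
apply: opnorm_le => x x1; rewrite vnormE ler_sqrt ?subr_ge0 //.
have x21 : vnorm2 x <= 1 by rewrite -sqr_vnorm exprn_ile1 ?vnorm_ge0.
have := Md x; have := vnorm2_ge0 x; nra.
Qed.

End OperatorNorm.

Section RightInverse.
Variable R : realType.
Local Notation H := (quat R).

Lemma full_row_rank_dsubmx m n (a : 'rV[H]_n) (A : 'M[H]_(m, n)) :
  full_row_rank (col_mx a A) -> full_row_rank A.
Proof.
move=> aA c cA.
have /aA/eqP : row_mx 0 c *m col_mx a A = 0 by rewrite mul_row_col mul0mx add0r.
by rewrite row_mx_eq0 => /andP[_ /eqP].
Qed.

Lemma rV_right_inv n (a : 'rV[H]_n) : a != 0 -> exists b, a *m b = 1%:M.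
Proof.
case/matrix0Pn=> i [j aj]; rewrite (ord1 i) in aj.
exists (delta_mx j 0 *m (invq (a 0 j))%:M).
by rewrite mulmxA -colE (mx11_scalar (col j a)) mxE -scalar_mxM mulqV.
Qed.

Lemma col_mx_right_inv m n (a : 'rV[H]_n) (A : 'M[H]_(m, n)) b B :
  a *m b = 1%:M -> A *m b = 0 -> A *m B = 1%:M ->
  col_mx a A *m row_mx b (B - b *m (a *m B)) = 1%:M.
Proof.
move=> ab Ab AB; rewrite mul_col_row (scalar_mx_block 1 m); congr block_mx.
- exact: ab.
- by rewrite mulmxBr !mulmxA ab mul1mx subrr.
- exact: Ab.
- by rewrite mulmxBr !mulmxA AB Ab !mul0mx subr0.
Qed.

Lemma full_row_rank_right_inv m n (A : 'M[H]_(m, n)) :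
  full_row_rank A -> exists B, A *m B = 1%:M.
Proof.
elim: m A => [|m IHm] A rkA; first by exists 0; apply/matrixP => -[].
have [a [A' eA]] : exists (a : 'rV[H]_n) (A' : 'M[H]_(m, n)), A = col_mx a A'.
  by exists (usubmx (A : 'M[H]_(1 + m, n))), (dsubmx (A : 'M[H]_(1 + m, n))); rewrite vsubmxK.
(* restated so that the row vectors in [rkA] have type 'rV_(1 + m), as [row_mx] produces *)
have {}rkA : full_row_rank (col_mx a A') by move: rkA; rewrite eA.
rewrite {}eA.
have [B AB] := IHm _ (full_row_rank_dsubmx rkA).
pose P := 1%:M - B *m A'.
have aP0 : a *m P != 0.
  apply/eqP => aP; have /rkA/eqP : row_mx 1%:M (- (a *m B)) *m col_mx a A' = 0.
    by rewrite mul_row_col mul1mx mulNmx -aP /P mulmxBr mulmx1 mulmxA.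
  by rewrite row_mx_eq0 => /andP[/eqP/matrixP/(_ 0 0)/eqP]; rewrite !mxE oner_eq0.
have [c aPc] := rV_right_inv aP0.
exists (row_mx (P *m c) (B - P *m c *m (a *m B))).
apply: col_mx_right_inv => //; first by rewrite mulmxA.
by rewrite mulmxA /P mulmxBr mulmx1 mulmxA AB mul1mx subrr mul0mx.
Qed.

End RightInverse.

Section MoorePenrose.
Variable R : realType.
Local Notation H := (quat R).

Lemma full_row_rank_Gram m n (A : 'M[H]_(m, n)) :
  full_row_rank A -> full_row_rank (A *m conjT A).
Proof.
move=> rkA c cG; apply: rkA; rewrite -[c *m A]conjTK.
have /vnorm2_eq0 -> : vnorm2 (conjT (c *m A)) = 0.
  by rewrite /vnorm2 /cVdot conjTK conjT_mulmx mulmxA -(mulmxA c) cG mul0mx mxE.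
exact: conjT0.
Qed.

Lemma hermitian_right_inv m (G Y : 'M[H]_m) :
  conjT G = G -> G *m Y = 1%:M -> conjT Y = Y /\ Y *m G = 1%:M.
Proof.
move=> GH GY; have YH : conjT Y = Y.
  by rewrite -[LHS]mulmx1 -GY mulmxA -GH -conjT_mulmx GY conjT1 mul1mx.
by split=> //; rewrite -YH -GH -conjT_mulmx GY conjT1.
Qed.

Lemma full_row_rank_MP_inverse m n (A : 'M[H]_(m, n)) :
  full_row_rank A -> exists Ad : 'M[H]_(n, m),
    is_MP_inverse A Ad /\ Ad *m A *m conjT A = conjT A.
Proof.
move=> rkA; have [Y GY] := full_row_rank_right_inv (full_row_rank_Gram rkA).
have [YH YG] : conjT Y = Y /\ Y *m (A *m conjT A) = 1%:M.
  by apply: hermitian_right_inv; rewrite // conjT_mulmx conjTK.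
have AAd : A *m (conjT A *m Y) = 1%:M by rewrite mulmxA.
exists (conjT A *m Y); split; last by rewrite -!mulmxA YG mulmx1.
split; first by rewrite AAd mul1mx.
- by rewrite -mulmxA AAd mulmx1.
- by rewrite AAd conjT1.
- by rewrite !conjT_mulmx conjTK YH mulmxA.
Qed.

End MoorePenrose.

Lemma geometric_residual (R : pzRingType) (x : R) n :
  1 - (1 - x) * \sum_(i < n) x ^+ i = x ^+ n.
Proof. by rewrite -[1 - x]opprB mulNr -subrX1 opprK addrC subrK. Qed.

Section Hyperpower.
Variables (R : realType) (m n : nat) (A : 'M[quat R]_(m, n)) (p : nat) (alpha : R).
Local Notation X := (hyperpower A p alpha).
Local Notation E := (hp_residual A p alpha).

Lemma hp_residualS k : E k.+1 = E k ^+ p.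
Proof.
rewrite /hp_residual /= mulmxA; set Ek := 1%:M - A *m X k.
have -> : A *m X k = 1%:M - Ek by rewrite opprB addrC subrK.
exact: geometric_residual.
Qed.

Lemma hp_residualE k : E k = E 0 ^+ (p ^ k).
Proof.
elim: k => [|k IHk]; first by rewrite expn0 expr1.
by rewrite hp_residualS IHk -exprM expnSr.
Qed.

Lemma hp_residual0_mulmx (x : 'cV[quat R]_m) :
  E 0 *m x = x - realq alpha *: (A *m (conjT A *m x)).
Proof. by rewrite /hp_residual /= mulmxBl mul1mx mulmx_realqZ -scalemxAl mulmxA. Qed.

Lemma hyperpower_fixed (Q : 'M[quat R]_n) k :
  Q *m conjT A = conjT A -> Q *m X k = X k.
Proof.
move=> QA; elim: k => [|k IHk] /=; first by rewrite mulmx_realqZ QA.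
by rewrite mulmxA IHk.
Qed.

End Hyperpower.

Section FirstResidual.
Variable R : realType.
Local Notation H := (quat R).

Lemma conjT_bounded_below m n (A : 'M[H]_(m, n)) : full_row_rank A ->
  exists2 c, 0 < c & forall x, c * vnorm2 x <= vnorm2 (conjT A *m x).
Proof.
case/full_row_rank_right_inv => B AB; set K := opnorm (conjT B) ^+ 2 + 1.
have K0 : 0 < K by rewrite ltr_wpDl ?sqr_ge0.
exists K^-1 => [|x]; first by rewrite invr_gt0.
have {1}-> : x = conjT B *m (conjT A *m x).
  by rewrite mulmxA -conjT_mulmx AB conjT1 mul1mx.
rewrite ler_pdivrMl // (le_trans (vnorm2_mulmx_opnorm _ _)) //.
by rewrite ler_wpM2r ?vnorm2_ge0 // lerDl.
Qed.

Lemma vnorm2_Gram_residual m n (A : 'M[H]_(m, n)) (a : R) x :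
  vnorm2 (x - realq a *: (A *m (conjT A *m x))) =
  vnorm2 x - 2 * a * vnorm2 (conjT A *m x) + a ^+ 2 * vnorm2 (A *m (conjT A *m x)).
Proof.
rewrite /vnorm2 cVdotBl !cVdotBr !cVdot_realqZr !cVdot_realqZl.
by rewrite (cVdotC (A *m _) x) cVdot_mulmxr; ring.
Qed.

Lemma opnorm_hp_residual0_lt1 m n (A : 'M[H]_(m, n)) p alpha :
  full_row_rank A -> 0 < alpha -> alpha < 2 / opnorm A ^+ 2 ->
  opnorm (hp_residual A p alpha 0) < 1.
Proof.
move=> rkA alpha0; set N := opnorm A => alphaN.
have {alphaN} g0 : 0 < alpha * (2 - alpha * N ^+ 2).
  rewrite mulr_gt0 // subr_gt0; have [N0|N0] := eqVneq N 0.
    by move: alphaN; rewrite N0 expr0n /= invr0 mulr0 => /(lt_trans alpha0); rewrite ltxx.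
  by rewrite -ltr_pdivlMr // exprn_gt0 // lt_def N0 opnorm_ge0.
have [c c0 lowA] := conjT_bounded_below rkA.
apply: (opnorm_lt1 (d := alpha * (2 - alpha * N ^+ 2) * c)); first exact: mulr_gt0.
move=> x; rewrite hp_residual0_mulmx vnorm2_Gram_residual.
have lowx := lowA x; have upAx := vnorm2_mulmx_opnorm A (conjT A *m x).
set s := vnorm2 x in lowx *; set t := vnorm2 _ in lowx upAx *.
set w := vnorm2 _ in upAx *; rewrite -/N in upAx.
have h1 : alpha ^+ 2 * w <= alpha ^+ 2 * (N ^+ 2 * t) by rewrite ler_wpM2l ?sqr_ge0.
have h2 := ler_wpM2l (ltW g0) lowx.
nra.
Qed.

End FirstResidual.

Lemma cvg0_le (R : realType) (f g : nat -> R) :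
  (forall k, 0 <= f k <= g k) -> g @ \oo --> 0 -> f @ \oo --> 0.
Proof.
move=> fg g0; apply: (@squeeze_cvgr _ _ _ _ (fun=> 0) g) => //; last exact: cvg_cst.
exact: nearW.
Qed.

Lemma cvg_expr_expn (R : realType) (q : R) p : 0 <= q -> q < 1 -> (1 < p)%N ->
  (fun k => q ^+ (p ^ k)) @ \oo --> 0.
Proof.
move=> q0 q1 p1; apply: (@cvg0_le _ _ (fun k => q ^+ k)); last first.
  by apply: cvg_expr; rewrite ger0_norm.
by move=> k; rewrite exprn_ge0 // ler_wiXn2l // ?ltW // ltnW // ltn_expl.
Qed.

Section OperatorNormConvergence.
Variables (R : realType) (m n p : nat).
Local Notation H := (quat R).

Lemma opnorm_mulmxl_cvg0 (M : 'M[H]_(m, n)) (F : nat -> 'M[H]_(n, p)) :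
  (fun k => opnorm (F k)) @ \oo --> 0 -> (fun k => opnorm (M *m F k)) @ \oo --> 0.
Proof.
move=> F0; apply: (@cvg0_le _ _ (fun k => opnorm M * opnorm (F k))).
  by move=> k; rewrite opnorm_ge0 opnorm_mulmx.
by rewrite -(mulr0 (opnorm M)); apply: cvgMl_tmp.
Qed.

Lemma opnorm_mulmxr_cvg0 (M : 'M[H]_(n, p)) (F : nat -> 'M[H]_(m, n)) :
  (fun k => opnorm (F k)) @ \oo --> 0 -> (fun k => opnorm (F k *m M)) @ \oo --> 0.
Proof.
move=> F0; apply: (@cvg0_le _ _ (fun k => opnorm (F k) * opnorm M)).
  by move=> k; rewrite opnorm_ge0 opnorm_mulmx.
by rewrite -(mul0r (opnorm M)); apply: cvgMr_tmp.
Qed.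

End OperatorNormConvergence.

Theorem mainTheorem7 (R : realType) (m n : nat) (A : 'M[quat R]_(m, n))
    (p : nat) (alpha : R) :
  full_row_rank A -> (2 <= p)%N ->
  0 < alpha -> alpha < 2 / opnorm A ^+ 2 ->
  (forall k : nat,
     opnorm (hp_residual A p alpha k) <= opnorm (hp_residual A p alpha 0) ^+ (p ^ k)) /\
  ((fun k : nat => opnorm (hp_residual A p alpha 0) ^+ (p ^ k)) @ \oo --> 0) /\
  ((fun k : nat => opnorm (A *m hyperpower A p alpha k - 1%:M)) @ \oo --> 0) /\
  (exists Ad : 'M[quat R]_(n, m),
     is_MP_inverse A Ad /\
     ((fun k : nat => opnorm (hyperpower A p alpha k *m A - Ad *m A)) @ \oo --> 0) /\
     ((fun k : nat => opnorm (hyperpower A p alpha k - Ad)) @ \oo --> 0)).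
Proof.
move=> rkA p2 alpha0 alphaN; set X := hyperpower A p alpha.
have E0_lt1 := opnorm_hp_residual0_lt1 p rkA alpha0 alphaN.
have Ek_le k : opnorm (hp_residual A p alpha k) <= opnorm (hp_residual A p alpha 0) ^+ (p ^ k).
  by rewrite hp_residualE opnormX.
have Ek0 := cvg_expr_expn (opnorm_ge0 _) E0_lt1 p2.
have AX1 : (fun k => opnorm (A *m X k - 1%:M)) @ \oo --> 0.
  apply: cvg0_le Ek0 => k; rewrite -opprB opnormN opnorm_ge0.
  exact: Ek_le.
have [Ad [AdMP AdA]] := full_row_rank_MP_inverse rkA.
have XAd : (fun k => opnorm (X k - Ad)) @ \oo --> 0.
  have eX k : X k - Ad = Ad *m (A *m X k - 1%:M).
    by rewrite mulmxBr mulmx1 mulmxA hyperpower_fixed.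
  by under eq_cvg do rewrite eX; apply: opnorm_mulmxl_cvg0.
do 3 split => //; exists Ad; do 2 split => //.
by under eq_cvg do rewrite -mulmxBl; apply: opnorm_mulmxr_cvg0.
Qed.
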